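(* Let $u(x,t)$ be the solution of the time-space fractional convection-diffusion problem below, and $\{u^j_i\}$ the solution of the implicit difference scheme below, with $N\ge5$ and $d_+(t)+d_-(t)\ge d_*>0$ on $[0,T]$. Assume $u$ is smooth enough (e.g. $u\in\mathcal C^{4,3}_{x,t}$ with the regularity required for the consistency estimates) that the local truncation error $R^{j+\sigma}_i:=\Delta^\alpha_{0,t_{j+\sigma}}u(x_i,\cdot)-(\delta^{\beta,(j)}_h u^{(\sigma)}_{\mathrm{ex}})_i-f^{j+\sigma}_i$, where $u^{(\sigma)}_{\mathrm{ex},i}=\sigma u(x_i,t_{j+1})+(1-\sigma)u(x_i,t_j)$, satisfies $|R^{j+\sigma}_i|\le C_R(\tau^2+h^2)$ for all $i,j$, with $C_R$ independent of $h,\tau$. Let $E^j_i=u(x_i,t_j)-u^j_i$. Then there is a constant $\tilde c>0$ independent of $h$ and $\tau$ such that \[ \|E^j\|\le \tilde c(\tau^2+h^2),\qquad 0\le j\le M. \]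
   Context: The continuous problem: for $0<\alpha<1$, $1<\beta<2$, $a<x<b$, $0<t\le T$, $\partial^\alpha_{0,t}u=\gamma(t)\partial_xu+d_+(t)\,{}_aD^\beta_xu+d_-(t)\,{}_xD^\beta_bu+f(x,t)$, $u(x,0)=\phi(x)$, $u(a,t)=u(b,t)=0$, where $\partial^\alpha_{0,t}u=\frac{1}{\Gamma(1-\alpha)}\int_0^t\partial_\xi u(x,\xi)(t-\xi)^{-\alpha}d\xi$ (Caputo), ${}_aD^\beta_xu=\frac{1}{\Gamma(2-\beta)}\partial_x^2\int_a^x u(\eta,t)(x-\eta)^{1-\beta}d\eta$, ${}_xD^\beta_bu=\frac{1}{\Gamma(2-\beta)}\partial_x^2\int_x^b u(\eta,t)(\eta-x)^{1-\beta}d\eta$ (Riemann–Liouville); $\gamma$ real, $d_\pm\ge0$. Grids: $h=(b-a)/N$, $x_i=a+ih$, $\tau=T/M$, $t_j=j\tau$, $\sigma=1-\alpha/2$, $t_{j+\sigma}=(j+\sigma)\tau$. $\|\bm v\|^2=h\sum_{i=1}^{N-1}v_i^2$. Time discretization: $a_0=\sigma^{1-\alpha}$, $a_\ell=(\ell+\sigma)^{1-\alpha}-(\ell-1+\sigma)^{1-\alpha}$ ($\ell\ge1$), $b_\ell=\frac{1}{2-\alpha}[(\ell+\sigma)^{2-\alpha}-(\ell-1+\sigma)^{2-\alpha}]-\frac12[(\ell+\sigma)^{1-\alpha}+(\ell-1+\sigma)^{1-\alpha}]$; $c^{(0)}_0=a_0$; for $j\ge1$: $c^{(j)}_0=a_0+b_1$,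 $c^{(j)}_m=a_m+b_{m+1}-b_m$ ($1\le m\le j-1$), $c^{(j)}_j=a_j-b_j$; $\Delta^\alpha_{0,t_{j+\sigma}}u=\frac{\tau^{-\alpha}}{\Gamma(2-\alpha)}\sum_{s=0}^jc^{(j)}_{j-s}(u^{s+1}-u^s)$. Space discretization: $g_k=(-1)^k\binom{\beta}{k}$, $\lambda_1=\frac{\beta^2+3\beta+2}{12}$, $\lambda_0=\frac{4-\beta^2}{6}$, $\lambda_{-1}=\frac{\beta^2-3\beta+2}{12}$, $\omega_0=\lambda_1g_0$, $\omega_1=\lambda_1g_1+\lambda_0g_0$, $\omega_k=\lambda_1g_k+\lambda_0g_{k-1}+\lambda_{-1}g_{k-2}$ ($k\ge2$); for a grid function $\bm v$ with $v_0=v_N=0$: $(\delta^{\beta,(j)}_h\bm v)_i=\gamma(t_{j+\sigma})\frac{v_{i+1}-v_{i-1}}{2h}+\frac{d_+(t_{j+\sigma})}{h^\beta}\sum_{k=0}^{i+1}\omega_kv_{i-k+1}+\frac{d_-(t_{j+\sigma})}{h^\beta}\sum_{k=0}^{N-i+1}\omega_kv_{i+k-1}$. Scheme: $\Delta^\alpha_{0,t_{j+\sigma}}u_i=(\delta^{\beta,(j)}_hu^{(\sigma)})_i+f(x_i,t_{j+\sigma})$ ($1\le i\le N-1$, $0\le j\le M-1$), $u^{(\sigma)}_i=\sigma u^{j+1}_i+(1-\sigma)u^j_i$, $u^0_i=\phi(x_i)$, $u^j_0=u^j_N=0$. *)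

From Stdlib Require Import Reals Lra Lia Arith Factorial.
Open Scope R_scope.

Fixpoint sumR (n : nat) (f : nat -> R) : R :=
  match n with O => 0 | S n' => sumR n' f + f n' end.
Fixpoint prodR (n : nat) (f : nat -> R) : R :=
  match n with O => 1 | S n' => prodR n' f * f n' end.

Definition improper_int (g : R -> R) (c d I : R) : Prop :=
  forall eps, 0 < eps -> exists del, 0 < del /\
    forall c' d', c < c' < c + del -> d - del < d' < d -> c' < d' ->
      exists pr : Riemann_integrable g c' d', Rabs (RiemannInt pr - I) < eps.

Definition improper_int_0_inf (g : R -> R) (I : R) : Prop :=
  forall eps, 0 < eps -> exists del L, 0 < del /\
    forall c' d', 0 < c' < del -> L < d' -> c' < d' ->
      exists pr : Riemann_integrable g c' d', Rabs (RiemannInt pr - I) < eps.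

Definition is_Gamma (z G : R) : Prop :=
  improper_int_0_inf (fun s => Rpower s (z - 1) * exp (- s)) G.

Definition is_caputo (alpha : R) (w : R -> R) (t D : R) : Prop :=
  exists (G : R) (dw : R -> R) (I : R),
    is_Gamma (1 - alpha) G /\
    (forall xi, 0 < xi < t -> derivable_pt_lim w xi (dw xi)) /\
    improper_int (fun xi => dw xi * Rpower (t - xi) (- alpha)) 0 t I /\
    D = I / G.

Definition is_RL_left (beta : R) (w : R -> R) (a b x D : R) : Prop :=
  exists (G : R) (F F' : R -> R) (F2 : R),
    is_Gamma (2 - beta) G /\
    (forall y, a < y < b ->
       improper_int (fun eta => w eta * Rpower (y - eta) (1 - beta)) a y (F y)) /\
    (forall y, a < y < b -> derivable_pt_lim F y (F' y)) /\
    derivable_pt_lim F' x F2 /\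
    D = F2 / G.

Definition is_RL_right (beta : R) (w : R -> R) (a b x D : R) : Prop :=
  exists (G : R) (F F' : R -> R) (F2 : R),
    is_Gamma (2 - beta) G /\
    (forall y, a < y < b ->
       improper_int (fun eta => w eta * Rpower (eta - y) (1 - beta)) y b (F y)) /\
    (forall y, a < y < b -> derivable_pt_lim F y (F' y)) /\
    derivable_pt_lim F' x F2 /\
    D = F2 / G.

Definition solves_problem (alpha beta a b T : R) (gam dp dm : R -> R)
    (f : R -> R -> R) (phi : R -> R) (u : R -> R -> R) : Prop :=
  (forall x, a < x < b -> u x 0 = phi x) /\
  (forall t, 0 <= t <= T -> u a t = 0 /\ u b t = 0) /\
  (forall x t, a < x < b -> 0 < t <= T ->
     exists Dc ux Dl Dr,
       is_caputo alpha (fun s => u x s) t Dc /\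
       derivable_pt_lim (fun y => u y t) x ux /\
       is_RL_left beta (fun y => u y t) a b x Dl /\
       is_RL_right beta (fun y => u y t) a b x Dr /\
       Dc = gam t * ux + dp t * Dl + dm t * Dr + f x t).

Definition sig (alpha : R) : R := 1 - alpha / 2.

Definition acoef (alpha : R) (l : nat) : R :=
  match l with
  | O => Rpower (sig alpha) (1 - alpha)
  | S _ => Rpower (INR l + sig alpha) (1 - alpha)
           - Rpower (INR l - 1 + sig alpha) (1 - alpha)
  end.

Definition bcoef (alpha : R) (l : nat) : R :=
  / (2 - alpha) * (Rpower (INR l + sig alpha) (2 - alpha)
                   - Rpower (INR l - 1 + sig alpha) (2 - alpha))
  - / 2 * (Rpower (INR l + sig alpha) (1 - alpha)
           + Rpower (INR l - 1 + sig alpha) (1 - alpha)).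

(* c^{(j)}_m, meaningful for 0 <= m <= j *)
Definition ccoef (alpha : R) (j m : nat) : R :=
  match j with
  | O => acoef alpha 0
  | S _ =>
      if Nat.eqb m 0 then acoef alpha 0 + bcoef alpha 1
      else if Nat.ltb m j then acoef alpha m + bcoef alpha (S m) - bcoef alpha m
      else acoef alpha j - bcoef alpha j
  end.

(* Delta^alpha_{0,t_{j+sigma}} v, with G2 = Gamma(2-alpha) *)
Definition Delta_t (alpha tau G2 : R) (j : nat) (v : nat -> R) : R :=
  Rpower tau (- alpha) / G2 *
  sumR (S j) (fun s => ccoef alpha j (j - s) * (v (S s) - v s)).

Definition gbinom (beta : R) (k : nat) : R :=
  prodR k (fun m => beta - INR m) / INR (fact k).
Definition gk (beta : R) (k : nat) : R := (-1) ^ k * gbinom beta k.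

Definition lam1 (beta : R) : R := (beta ^ 2 + 3 * beta + 2) / 12.
Definition lam0 (beta : R) : R := (4 - beta ^ 2) / 6.
Definition lamm1 (beta : R) : R := (beta ^ 2 - 3 * beta + 2) / 12.

Definition omega (beta : R) (k : nat) : R :=
  match k with
  | O => lam1 beta * gk beta 0
  | S O => lam1 beta * gk beta 1 + lam0 beta * gk beta 0
  | S (S k') => lam1 beta * gk beta k + lam0 beta * gk beta (S k')
                + lamm1 beta * gk beta k'
  end.

Definition hstep (a b : R) (N : nat) : R := (b - a) / INR N.
Definition tstep (T : R) (M : nat) : R := T / INR M.
Definition xg (a b : R) (N i : nat) : R := a + INR i * hstep a b N.
Definition tg (T : R) (M j : nat) : R := INR j * tstep T M.
Definition tgs (alpha T : R) (M j : nat) : R := (INR j + sig alpha) * tstep T M.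

Definition delta_h (alpha beta a b T : R) (gam dp dm : R -> R) (N M j : nat)
    (v : nat -> R) (i : nat) : R :=
  let h := hstep a b N in
  let ts := tgs alpha T M j in
  gam ts * (v (S i) - v (i - 1)%nat) / (2 * h)
  + dp ts / Rpower h beta * sumR (i + 2) (fun k => omega beta k * v (i + 1 - k)%nat)
  + dm ts / Rpower h beta * sumR (N - i + 2) (fun k => omega beta k * v (i + k - 1)%nat).

(* U (indexed U j i = u^j_i) solves the implicit difference scheme *)
Definition scheme_solution (alpha beta a b T : R) (gam dp dm : R -> R)
    (f : R -> R -> R) (phi : R -> R) (G2 : R) (N M : nat)
    (U : nat -> nat -> R) : Prop :=
  (forall i, (1 <= i <= N - 1)%nat -> U 0%nat i = phi (xg a b N i)) /\
  (forall j, (j <= M)%nat -> U j 0%nat = 0 /\ U j N = 0) /\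
  (forall j i, (j < M)%nat -> (1 <= i <= N - 1)%nat ->
     Delta_t alpha (tstep T M) G2 j (fun s => U s i)
     = delta_h alpha beta a b T gam dp dm N M j
         (fun k => sig alpha * U (S j) k + (1 - sig alpha) * U j k) i
       + f (xg a b N i) (tgs alpha T M j)).

Definition trunc_err (alpha beta a b T : R) (gam dp dm : R -> R)
    (f : R -> R -> R) (u : R -> R -> R) (G2 : R) (N M j i : nat) : R :=
  Delta_t alpha (tstep T M) G2 j (fun s => u (xg a b N i) (tg T M s))
  - delta_h alpha beta a b T gam dp dm N M j
      (fun k => sig alpha * u (xg a b N k) (tg T M (S j))
                + (1 - sig alpha) * u (xg a b N k) (tg T M j)) i
  - f (xg a b N i) (tgs alpha T M j).

Definition gnorm (h : R) (N : nat) (v : nat -> R) : R :=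
  sqrt (h * sumR (N - 1) (fun k => v (S k) ^ 2)).

(* The error E^j_i = u(x_i, t_j) - u^j_i solves the scheme with the truncation error R as
   right-hand side, so the estimate is a stability bound. Multiplying the error equation by
   the averaged error E^(sigma)_i and summing over i gives an energy inequality. In space the
   operator is dissipative: the convection part is antisymmetric, and the weights omega_k make
   both fractional parts negative semidefinite because omega_k >= 0 for k >= 3,
   omega_0 + omega_2 >= 0 and sum_(k <= N) omega_k <= 0. In time, Alikhanov's inequality
   (1/2) Delta(v^2) <= v^(sigma) Delta(v) holds because the L2-1_sigma coefficients c^(j)_m
   decrease in m and satisfy sigma^2 c^(j)_1 <= (2 sigma - 1) c^(j)_0, which follow from the
   concavity of x^(1 - alpha) and the convexity of its derivative. Hence
   Delta ||E||^2 <= 2 W ||R|| with W the largest ||E^s||, and a discrete Gronwall argument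
   based on c^(j)_j >= (1 - alpha) (j + 1)^(-alpha) yields
   W^2 <= 2 Gamma(2 - alpha) T^alpha / (1 - alpha) W max ||R||. *)

From Stdlib Require Import Reals Lra Lia Arith.
From Coquelicot Require Import Coquelicot.
Open Scope R_scope.

Lemma sumR_ext n f g : (forall k, (k < n)%nat -> f k = g k) -> sumR n f = sumR n g.
Proof.
  induction n as [|n IH]; intros Hfg; simpl; auto.
  rewrite IH, Hfg by (auto; intros; apply Hfg; lia); reflexivity.
Qed.

Lemma sumR_S n f : sumR (S n) f = sumR n f + f n.
Proof. reflexivity. Qed.

Lemma sumR_add n f g : sumR n (fun k => f k + g k) = sumR n f + sumR n g.
Proof. induction n; simpl; [lra | rewrite IHn; lra]. Qed.

Lemma sumR_sub n f g : sumR n (fun k => f k - g k) = sumR n f - sumR n g.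
Proof. induction n; simpl; [lra | rewrite IHn; lra]. Qed.

Lemma sumR_scal n c f : sumR n (fun k => c * f k) = c * sumR n f.
Proof. induction n; simpl; [lra | rewrite IHn; lra]. Qed.

Lemma sumR_const n c : sumR n (fun _ => c) = INR n * c.
Proof. induction n; simpl sumR; [simpl; lra | rewrite IHn, S_INR; lra]. Qed.

Lemma sumR_le n f g : (forall k, (k < n)%nat -> f k <= g k) -> sumR n f <= sumR n g.
Proof.
  induction n as [|n IH]; intros Hfg; simpl; [lra|].
  assert (f n <= g n) by (apply Hfg; lia).
  assert (sumR n f <= sumR n g) by (apply IH; intros; apply Hfg; lia).
  lra.
Qed.

Lemma sumR_nonneg n f : (forall k, (k < n)%nat -> 0 <= f k) -> 0 <= sumR n f.
Proof.
  intros Hf. replace 0 with (sumR n (fun _ => 0)) by (rewrite sumR_const; ring).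
  now apply sumR_le.
Qed.

Lemma sumR_sq_nonneg n f : 0 <= sumR n (fun k => f k ^ 2).
Proof. apply sumR_nonneg; intros; apply pow2_ge_0. Qed.

Lemma sumR_shift n f : sumR (S n) f = f 0%nat + sumR n (fun k => f (S k)).
Proof. induction n; simpl in *; [lra | rewrite IHn; lra]. Qed.

Lemma sumR_app n m f : sumR (n + m) f = sumR n f + sumR m (fun k => f (n + k)%nat).
Proof.
  induction m; simpl; [rewrite Nat.add_0_r; lra|].
  rewrite Nat.add_succ_r; simpl; rewrite IHm; lra.
Qed.

Lemma sumR_comm n m (F : nat -> nat -> R) :
  sumR n (fun i => sumR m (fun k => F i k)) = sumR m (fun k => sumR n (fun i => F i k)).
Proof.
  induction n; simpl.
  - induction m; simpl; [reflexivity | rewrite <- IHm; lra].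
  - rewrite IHn, <- sumR_add; reflexivity.
Qed.

Lemma sumR_le_prefix n m f : (n <= m)%nat -> (forall k, (k < m)%nat -> 0 <= f k) ->
  sumR n f <= sumR m f.
Proof.
  intros Hnm Hf. replace m with (n + (m - n))%nat by lia. rewrite sumR_app.
  assert (0 <= sumR (m - n) (fun k => f (n + k)%nat)) by (apply sumR_nonneg; intros; apply Hf; lia).
  lra.
Qed.

Lemma sumR_cauchy_schwarz n f g :
  sumR n (fun k => f k * g k) <= sqrt (sumR n (fun k => f k ^ 2)) * sqrt (sumR n (fun k => g k ^ 2)).
Proof.
  set (A := sumR n (fun k => g k ^ 2)); set (B := sumR n (fun k => f k * g k));
    set (C := sumR n (fun k => f k ^ 2)).
  assert (Hquad : forall t, 0 <= C + 2 * t * B + t * t * A).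
  { intros t.
    replace (C + 2 * t * B + t * t * A) with (sumR n (fun k => (f k + t * g k) ^ 2))
      by (unfold A, B, C; rewrite <- !sumR_scal, <- !sumR_add; apply sumR_ext; intros; ring).
    apply sumR_sq_nonneg. }
  assert (HA : 0 <= A) by apply sumR_sq_nonneg.
  assert (HC : 0 <= C) by apply sumR_sq_nonneg.
  rewrite <- sqrt_mult by assumption.
  destruct (Rle_dec B 0) as [HB|HB]; [pose proof (sqrt_pos (C * A)); lra|].
  rewrite <- (sqrt_pow2 B) by lra. apply sqrt_le_1_alt.
  destruct (Req_dec A 0) as [H0|H0].
  - specialize (Hquad (- (C + 1) / (2 * B))). rewrite H0 in Hquad.
    replace (C + 2 * (- (C + 1) / (2 * B)) * B + - (C + 1) / (2 * B) * (- (C + 1) / (2 * B)) * 0)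
      with (-1) in Hquad by (field; lra). lra.
  - specialize (Hquad (- B / A)).
    replace (C + 2 * (- B / A) * B + - B / A * (- B / A) * A) with ((C * A - B ^ 2) / A) in Hquad
      by (field; auto).
    assert (0 <= C * A - B ^ 2); [|lra].
    apply Rmult_le_reg_r with (/ A); [apply Rinv_0_lt_compat; lra | lra].
Qed.

Lemma gk_0 b : gk b 0 = 1.
Proof. unfold gk, gbinom; simpl; lra. Qed.

Lemma gk_S b k : gk b (S k) = gk b k * (INR k - b) / INR (S k).
Proof.
  unfold gk, gbinom. simpl prodR. rewrite fact_simpl, mult_INR. simpl pow.
  assert (INR (S k) <> 0) by (apply not_0_INR; lia).
  pose proof (INR_fact_neq_0 k). field; auto.
Qed.

Lemma gk_1 b : gk b 1 = - b.
Proof. rewrite gk_S, gk_0; simpl; lra. Qed.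

Lemma gk_2 b : gk b 2 = b * (b - 1) / 2.
Proof. rewrite gk_S, gk_1; simpl; field. Qed.

Lemma gk_pos b k : 1 < b < 2 -> (2 <= k)%nat -> 0 < gk b k.
Proof.
  intros Hb Hk. induction k as [|k IH]; [lia|].
  destruct (Nat.eq_dec k 1) as [->|Hk1]; [rewrite gk_2; nra|].
  assert (2 <= INR k) by (replace 2 with (INR 2) by (simpl; lra); apply le_INR; lia).
  assert (0 < gk b k) by (apply IH; lia).
  rewrite gk_S, S_INR. apply Rmult_lt_0_compat; [apply Rmult_lt_0_compat; lra|].
  apply Rinv_0_lt_compat; lra.
Qed.

Lemma sumR_gk b n : 1 < b -> sumR (S n) (gk b) = gk b n * (b - INR n) / b.
Proof.
  intros Hb. induction n as [|n IH]; [simpl; rewrite gk_0; field; lra|].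
  rewrite sumR_S, IH, gk_S, S_INR.
  pose proof (pos_INR n). field; repeat split; lra.
Qed.

Lemma sumR_omega b n : sumR (S (S (S n))) (omega b) =
  lam1 b * sumR (S (S (S n))) (gk b) + lam0 b * sumR (S (S n)) (gk b)
  + lamm1 b * sumR (S n) (gk b).
Proof.
  induction n as [|n IH]; [simpl; rewrite !gk_0; lra|].
  rewrite sumR_S, IH. cbn [omega sumR]. lra.
Qed.

Lemma omega_nonneg b k : 1 < b < 2 -> (3 <= k)%nat -> 0 <= omega b k.
Proof.
  intros Hb Hk. destruct k as [|[|[|n]]]; try lia. cbn [omega].
  rewrite (gk_S b (S (S n))), (gk_S b (S n)), !S_INR.
  set (x := INR n + 1). assert (1 <= x) by (unfold x; pose proof (pos_INR n); lra).
  set (G := gk b (S n)). unfold lam1, lam0, lamm1.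
  set (P := (b ^ 2 + 3 * b + 2) * (x - b) * (x + 1 - b) + 2 * (4 - b ^ 2) * (x - b) * (x + 2)
            + (b ^ 2 - 3 * b + 2) * (x + 1) * (x + 2)).
  replace (_ + _ + _) with (G * P / (12 * (x + 1) * (x + 1 + 1))) by (unfold P; field; lra).
  apply Rmult_le_pos; [|left; apply Rinv_0_lt_compat; nra].
  destruct n as [|n].
  - assert (Hx : x = 1) by (unfold x; simpl; lra).
    unfold G, P; rewrite gk_1, Hx.
    replace ((b ^ 2 + 3 * b + 2) * (1 - b) * (1 + 1 - b) + 2 * (4 - b ^ 2) * (1 - b) * (1 + 2)
             + (b ^ 2 - 3 * b + 2) * (1 + 1) * (1 + 2))
      with (- ((b - 1) * (2 - b)) * (b * b + 9 * b + 20)) by ring.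
    replace (- b * _) with (b * ((b - 1) * (2 - b)) * (b * b + 9 * b + 20)) by ring.
    apply Rmult_le_pos; [apply Rmult_le_pos|]; nra.
  - assert (0 < G) by (apply gk_pos; auto; lia).
    assert (2 <= x) by (unfold x; rewrite S_INR; pose proof (pos_INR n); lra).
    apply Rmult_le_pos; [lra|]. unfold P.
    replace (_ + _ + _) with (12 * (x - 2) ^ 2 + (12 + 42 * (2 - b) - 6 * (2 - b) ^ 2) * (x - 2)
      + (2 - b) ^ 2 * (49 - 14 * (2 - b) + (2 - b) ^ 2)) by ring.
    assert (0 <= (12 + 42 * (2 - b) - 6 * (2 - b) ^ 2) * (x - 2)) by (apply Rmult_le_pos; nra).
    assert (0 <= (2 - b) ^ 2 * (49 - 14 * (2 - b) + (2 - b) ^ 2)) by (apply Rmult_le_pos; nra).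
    nra.
Qed.

Lemma omega_0_add_2_nonneg b : 1 < b < 2 -> 0 <= omega b 0 + omega b 2.
Proof.
  intros Hb. cbn [omega]. rewrite gk_2, gk_1, gk_0. unfold lam1, lam0, lamm1.
  replace (_ + _) with ((b - 1) * (b ^ 3 / 2 + 7 / 2 * b ^ 2 + 5 * b - 4) / 12) by field.
  apply Rmult_le_pos; [apply Rmult_le_pos; nra | lra].
Qed.

Lemma sumR_omega_nonpos b N : 1 < b < 2 -> (5 <= N)%nat -> sumR (S N) (omega b) <= 0.
Proof.
  intros Hb HN. destruct N as [|[|[|n]]]; try lia.
  rewrite sumR_omega, !sumR_gk by lra.
  rewrite (gk_S b (S (S n))), (gk_S b (S n)), !S_INR.
  set (x := INR n).
  assert (2 <= x) by (unfold x; replace 2 with (INR 2) by (simpl; lra); apply le_INR; lia).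
  assert (0 < gk b (S n)) by (apply gk_pos; auto; lia). set (G := gk b (S n)) in *.
  unfold lam1, lam0, lamm1.
  set (P := (b ^ 2 + 3 * b + 2) * (x + 2 - b) * (x + 3 - b) + 2 * (4 - b ^ 2) * (x + 2 - b) * (x + 3)
            + (b ^ 2 - 3 * b + 2) * (x + 2) * (x + 3)).
  replace (_ + _ + _) with (- (G * (x + 1 - b) / b) * (P / (12 * (x + 2) * (x + 3))))
    by (unfold P; field; lra).
  assert (0 <= G * (x + 1 - b) / b)
    by (apply Rmult_le_pos; [nra | left; apply Rinv_0_lt_compat; lra]).
  assert (0 <= P / (12 * (x + 2) * (x + 3))); [|nra].
  apply Rmult_le_pos; [|left; apply Rinv_0_lt_compat; nra]. unfold P.
  replace (_ + _ + _) with ((b ^ 2 + 3 * b + 2) * ((x + 2 - b) * (x + 3 - b))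
    + ((2 - b) * (x + 3)) * (2 * (2 + b) * (x + 2 - b) - (b - 1) * (x + 2))) by ring.
  assert (0 <= (b ^ 2 + 3 * b + 2) * ((x + 2 - b) * (x + 3 - b))) by (apply Rmult_le_pos; nra).
  assert (0 <= (2 - b) * (x + 3) * (2 * (2 + b) * (x + 2 - b) - (b - 1) * (x + 2)))
    by (apply Rmult_le_pos; nra).
  lra.
Qed.

(* The weights are only tested against a profile D with D_0 = D_2 <= D_1 and D_q <= D_1:
   this is what [sum_k v_k v_(k+1-q)] looks like as a function of the shift q. *)
Lemma sumR_omega_mul_nonpos b N (D : nat -> R) :
  1 < b < 2 -> (5 <= N)%nat -> 0 <= D 1%nat -> D 0%nat = D 2%nat ->
  (forall q, (q <= N)%nat -> D q <= D 1%nat) ->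
  sumR (S N) (fun q => omega b q * D q) <= 0.
Proof.
  intros Hb HN HD1 HD02 HD.
  assert (sumR (S N) (fun q => omega b q * D q) <= sumR (S N) (fun q => omega b q * D 1%nat)).
  { destruct N as [|[|[|n]]]; try lia.
    rewrite !(sumR_shift (S (S (S n)))), !(sumR_shift (S (S n))), !(sumR_shift (S n)).
    assert (sumR (S n) (fun k => omega b (S (S (S k))) * D (S (S (S k))))
            <= sumR (S n) (fun k => omega b (S (S (S k))) * D 1%nat)).
    { apply sumR_le; intros k Hk.
      apply Rmult_le_compat_l; [apply omega_nonneg; auto; lia | apply HD; lia]. }
    assert (D 0%nat <= D 1%nat) by (apply HD; lia).
    pose proof (omega_0_add_2_nonneg b Hb).
    assert ((omega b 0 + omega b 2) * (D 0%nat - D 1%nat) <= 0) by nra.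
    rewrite <- HD02. nra. }
  assert (sumR (S N) (fun q => omega b q * D 1%nat) <= 0); [|lra].
  rewrite (sumR_ext _ _ (fun q => D 1%nat * omega b q)) by (intros; ring).
  rewrite sumR_scal. pose proof (sumR_omega_nonpos b N Hb HN). nra.
Qed.

Lemma sumR_mul_le_sq n (v w : nat -> R) :
  sumR n (fun k => w k ^ 2) <= sumR n (fun k => v k ^ 2) ->
  sumR n (fun k => v k * w k) <= sumR n (fun k => v k ^ 2).
Proof.
  intros Hwv.
  assert (sumR n (fun k => v k * w k) <= sumR n (fun k => / 2 * (v k ^ 2 + w k ^ 2))).
  { apply sumR_le; intros k _. pose proof (pow2_ge_0 (v k - w k)). nra. }
  rewrite sumR_scal, sumR_add in H. lra.
Qed.

Lemma sumR_shift_down (f : nat -> R) n d : f 0%nat = 0 ->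
  sumR n (fun k => f (S k - d)%nat) = sumR (n - d) (fun k => f (S k)).
Proof.
  intros Hf0. induction n as [|n IH]; [reflexivity|].
  cbn [sumR]. rewrite IH. destruct (le_lt_dec d n).
  - replace (S n - d)%nat with (S (n - d)) by lia. reflexivity.
  - replace (S n - d)%nat with 0%nat by lia. replace (n - d)%nat with 0%nat by lia.
    simpl; rewrite Hf0; lra.
Qed.

Lemma sumR_shift_up_le (g : nat -> R) n d :
  (forall k, 0 <= g k) -> (forall m, (n < m)%nat -> g m = 0) ->
  sumR n (fun k => g (S k + d)%nat) <= sumR n (fun k => g (S k)).
Proof.
  intros Hg Hz.
  assert (E1 := sumR_app d n (fun k => g (S k))).
  assert (E2 := sumR_app n d (fun k => g (S k))). cbv beta in E1, E2.
  rewrite (sumR_ext d (fun k => g (S (n + k))) (fun _ => 0)), sumR_const in E2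
    by (intros; apply Hz; lia).
  rewrite (sumR_ext _ (fun k => g (S k + d)%nat) (fun k => g (S (d + k)))) by (intros; f_equal; lia).
  replace (d + n)%nat with (n + d)%nat in E1 by lia.
  assert (0 <= sumR d (fun k => g (S k))) by (apply sumR_nonneg; auto). lra.
Qed.

Section Dissipativity.

Variables (b : R) (N : nat) (v : nat -> R).
Hypotheses (Hb : 1 < b < 2) (HN : (5 <= N)%nat) (Hv0 : v 0%nat = 0) (HvN : v N = 0).

(* The interior nodes are 1 .. N-1, indexed in [sumR] by k = 0 .. N-2. *)
Let n := (N - 1)%nat.
Let Sv := sumR n (fun k => v (S k) ^ 2).

Lemma sumR_succ_sq_le : sumR n (fun k => v (S (S k)) ^ 2) <= Sv.
Proof.
  unfold Sv, n. destruct N as [|m]; [lia|]. replace (S m - 1)%nat with (S (m - 1)) by lia.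
  rewrite (sumR_shift (m - 1) (fun k => v (S k) ^ 2)). cbn [sumR].
  replace (S (S (m - 1))) with (S m) by lia. rewrite HvN.
  pose proof (pow2_ge_0 (v 1%nat)). lra.
Qed.

Lemma sumR_mul_pred_eq_succ :
  sumR n (fun k => v (S k) * v k) = sumR n (fun k => v (S k) * v (S (S k))).
Proof.
  unfold n. destruct N as [|m]; [lia|]. replace (S m - 1)%nat with (S (m - 1)) by lia.
  rewrite sumR_shift, Hv0. cbn [sumR].
  replace (S (S (m - 1))) with (S m) by lia. rewrite HvN.
  rewrite (sumR_ext _ (fun k => v (S (S k)) * v (S k)) (fun k => v (S k) * v (S (S k))))
    by (intros; ring).
  ring.
Qed.

Lemma convection_term_eq0 :
  sumR n (fun k => v (S k) * (v (S (S k)) - v (S k - 1)%nat)) = 0.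
Proof.
  rewrite (sumR_ext _ _ (fun k => v (S k) * v (S (S k)) - v (S k) * v k)).
  - rewrite sumR_sub, sumR_mul_pred_eq_succ; ring.
  - intros k _. replace (S k - 1)%nat with k by lia. ring.
Qed.

Lemma left_fractional_term_nonpos :
  sumR n (fun k => v (S k) * sumR (S k + 2) (fun q => omega b q * v (S k + 1 - q)%nat)) <= 0.
Proof.
  set (D := fun q => sumR n (fun k => v (S k) * v (S k + 1 - q)%nat)).
  replace (sumR n _) with (sumR (S N) (fun q => omega b q * D q)).
  - assert (HD1 : D 1%nat = Sv)
      by (apply sumR_ext; intros; replace (S k + 1 - 1)%nat with (S k) by lia; ring).
    apply sumR_omega_mul_nonpos; auto.
    + rewrite HD1; apply sumR_sq_nonneg.
    + unfold D. rewrite (sumR_ext _ _ (fun k => v (S k) * v (S (S k)))), <- sumR_mul_pred_eq_succ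
        by (intros; do 2 f_equal; lia).
      apply sumR_ext; intros; do 2 f_equal; lia.
    + intros q Hq. rewrite HD1. apply sumR_mul_le_sq. destruct q as [|q].
      * rewrite (sumR_ext _ _ (fun k => v (S (S k)) ^ 2)) by (intros; do 2 f_equal; lia).
        apply sumR_succ_sq_le.
      * rewrite (sumR_ext _ _ (fun k => (fun j => v j ^ 2) (S k - q)%nat))
          by (intros; do 2 f_equal; lia).
        rewrite (sumR_shift_down (fun j => v j ^ 2)) by (simpl; rewrite Hv0; ring).
        apply sumR_le_prefix; [lia | intros; apply pow2_ge_0].
  - transitivity (sumR n (fun k => sumR (S N) (fun q => v (S k) * (omega b q * v (S k + 1 - q)%nat)))).
    + rewrite sumR_comm. apply sumR_ext; intros q _.
      unfold D; rewrite <- sumR_scal. apply sumR_ext; intros; ring.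
    + apply sumR_ext. intros k Hk.
      replace (S N) with (S k + 2 + (N - S k - 1))%nat by (unfold n in Hk; lia).
      rewrite sumR_app, sumR_scal, (sumR_ext (N - S k - 1) _ (fun _ => 0)), sumR_const.
      * ring.
      * intros q _. replace (S k + 1 - (S k + 2 + q))%nat with 0%nat by lia. rewrite Hv0; ring.
Qed.

(* Extension of v by zero beyond N, so that all shifted indices are harmless. *)
Let w := fun m => if (m <=? N)%nat then v m else 0.

Lemma w_eq m : (m <= N)%nat -> w m = v m.
Proof. intros Hm. unfold w. now rewrite (proj2 (Nat.leb_le m N) Hm). Qed.

Lemma right_fractional_term_nonpos :
  sumR n (fun k => v (S k) * sumR (N - S k + 2) (fun q => omega b q * v (S k + q - 1)%nat)) <= 0.
Proof.
  set (D := fun q => sumR n (fun k => v (S k) * w (S k + q - 1)%nat)).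
  replace (sumR n _) with (sumR (S N) (fun q => omega b q * D q)).
  - assert (HD1 : D 1%nat = Sv).
    { apply sumR_ext; intros k Hk. rewrite w_eq by (unfold n in Hk; lia).
      replace (S k + 1 - 1)%nat with (S k) by lia. ring. }
    assert (HD0 : D 0%nat = sumR n (fun k => v (S k) * v (S (S k)))).
    { rewrite <- sumR_mul_pred_eq_succ. apply sumR_ext; intros k Hk.
      rewrite w_eq by (unfold n in Hk; lia). do 2 f_equal; lia. }
    apply sumR_omega_mul_nonpos; auto.
    + rewrite HD1; apply sumR_sq_nonneg.
    + rewrite HD0. apply sumR_ext; intros k Hk.
      rewrite w_eq by (unfold n in Hk; lia). do 2 f_equal; lia.
    + intros q Hq. rewrite HD1. destruct q as [|q].
      * rewrite HD0. apply sumR_mul_le_sq, sumR_succ_sq_le.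
      * apply sumR_mul_le_sq.
        rewrite (sumR_ext _ _ (fun k => (fun j => w j ^ 2) (S k + q)%nat))
          by (intros; do 2 f_equal; lia).
        eapply Rle_trans; [apply (sumR_shift_up_le (fun j => w j ^ 2)); [intros; apply pow2_ge_0|]|].
        -- intros m Hm. unfold w. destruct (m <=? N)%nat eqn:Em; [|ring].
           apply Nat.leb_le in Em. replace m with N by (unfold n in Hm; lia). rewrite HvN; ring.
        -- right. apply sumR_ext; intros k Hk. rewrite w_eq by (unfold n in Hk; lia). reflexivity.
  - transitivity (sumR n (fun k => sumR (S N) (fun q => v (S k) * (omega b q * w (S k + q - 1)%nat)))).
    + rewrite sumR_comm. apply sumR_ext; intros q _.
      unfold D; rewrite <- sumR_scal. apply sumR_ext; intros; ring.
    + apply sumR_ext. intros k Hk.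
      replace (S N) with (N - S k + 2 + k)%nat by (unfold n in Hk; lia).
      rewrite sumR_app, (sumR_ext k _ (fun _ => 0)), sumR_const, <- sumR_scal.
      * rewrite Rmult_0_r, Rplus_0_r. apply sumR_ext; intros q Hq.
        rewrite w_eq by lia. reflexivity.
      * intros q _. unfold w. rewrite (proj2 (Nat.leb_gt _ N)) by lia. ring.
Qed.

End Dissipativity.

Lemma delta_h_dissipative al be a b T gam dp dm N M j (v : nat -> R) :
  1 < be < 2 -> (5 <= N)%nat -> a < b -> v 0%nat = 0 -> v N = 0 ->
  0 <= dp (tgs al T M j) -> 0 <= dm (tgs al T M j) ->
  sumR (N - 1) (fun k => v (S k) * delta_h al be a b T gam dp dm N M j v (S k)) <= 0.
Proof.
  intros Hbe HN Hab Hv0 HvN Hdp Hdm. unfold delta_h.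
  set (h := hstep a b N); set (ts := tgs al T M j) in *.
  assert (Hh : 0 < h) by (apply Rdiv_lt_0_compat; [lra | apply lt_0_INR; lia]).
  assert (Hhb : 0 < / Rpower h be) by (apply Rinv_0_lt_compat, exp_pos).
  rewrite (sumR_ext _ _ (fun k => gam ts / (2 * h) * (v (S k) * (v (S (S k)) - v (S k - 1)%nat))
     + dp ts / Rpower h be * (v (S k) * sumR (S k + 2) (fun q => omega be q * v (S k + 1 - q)%nat))
     + dm ts / Rpower h be * (v (S k) * sumR (N - S k + 2) (fun q => omega be q * v (S k + q - 1)%nat))))
    by (intros; unfold Rdiv; ring).
  rewrite !sumR_add, !sumR_scal, convection_term_eq0 by assumption.
  assert (Hl := left_fractional_term_nonpos be N v Hbe HN Hv0 HvN).
  assert (Hr := right_fractional_term_nonpos be N v Hbe HN Hv0 HvN).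
  apply (Rmult_le_compat_l (dp ts / Rpower h be)) in Hl; [|unfold Rdiv; apply Rmult_le_pos; lra].
  apply (Rmult_le_compat_l (dm ts / Rpower h be)) in Hr; [|unfold Rdiv; apply Rmult_le_pos; lra].
  lra.
Qed.

Lemma Rpower_pos x e : 0 < Rpower x e.
Proof. apply exp_pos. Qed.

Lemma Rpower_1_l e : Rpower 1 e = 1.
Proof. unfold Rpower. rewrite ln_1, Rmult_0_r, exp_0. reflexivity. Qed.

Lemma Rpower_le_neg x y e : 0 < x <= y -> e <= 0 -> Rpower y e <= Rpower x e.
Proof.
  intros Hxy He. replace e with (- (- e)) by ring. rewrite (Rpower_Ropp y (- e)), (Rpower_Ropp x (- e)).
  apply Rinv_le_contravar; [apply Rpower_pos | apply Rle_Rpower_l; lra].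
Qed.

Lemma is_derive_Rpower x e : 0 < x -> is_derive (fun y => Rpower y e) x (e * Rpower x (e - 1)).
Proof. intros Hx. apply is_derive_Reals, derivable_pt_lim_power; assumption. Qed.

Lemma ex_derive_Rpower x e : 0 < x -> ex_derive (fun y => Rpower y e) x.
Proof. intros Hx. eexists. apply is_derive_Rpower; assumption. Qed.

Lemma Derive_Rpower x e : 0 < x -> Derive (fun y => Rpower y e) x = e * Rpower x (e - 1).
Proof. intros Hx. apply is_derive_unique, is_derive_Rpower; assumption. Qed.

Lemma mean_value (f f' : R -> R) a b : a < b ->
  (forall c, a <= c <= b -> is_derive f c (f' c)) ->
  exists c, a < c < b /\ f b - f a = f' c * (b - a).
Proof.
  intros Hab Hf. destruct (MVT_cor2 f f' a b Hab) as [c [Hc1 Hc2]].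
  - intros c Hc. apply is_derive_Reals; auto.
  - exists c; split; assumption.
Qed.

Lemma le_of_derive_nonneg (f f' : R -> R) a b : a <= b ->
  (forall c, a <= c <= b -> is_derive f c (f' c)) -> (forall c, a < c < b -> 0 <= f' c) ->
  f a <= f b.
Proof.
  intros Hab Hf Hf'. destruct (Req_dec a b) as [->|Hne]; [lra|].
  destruct (mean_value f f' a b) as [c [Hc E]]; auto; [lra|].
  specialize (Hf' c Hc). nra.
Qed.

Lemma le_of_derive_nonpos (f f' : R -> R) a b : a <= b ->
  (forall c, a <= c <= b -> is_derive f c (f' c)) -> (forall c, a < c < b -> f' c <= 0) ->
  f b <= f a.
Proof.
  intros Hab Hf Hf'. destruct (Req_dec a b) as [->|Hne]; [lra|].
  destruct (mean_value f f' a b) as [c [Hc E]]; auto; [lra|].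
  specialize (Hf' c Hc). nra.
Qed.

Section CoefficientFunctions.

Variable al : R.
Hypothesis Hal : 0 < al < 1.

(* For l >= 1 and p = l - 1 + sigma: a_l = acoef_fun p, b_l = bcoef_fun p, and
   c^(j)_l = ccoef_fun p when l < j. *)
Definition powa x := Rpower x (1 - al).
Definition dpowa x := (1 - al) * Rpower x (- al).
Definition d2powa x := (1 - al) * (- al) * Rpower x (- al - 1).
Definition ipowa x := / (2 - al) * Rpower x (2 - al).

Definition acoef_fun p := powa (p + 1) - powa p.
Definition bcoef_fun p := ipowa (p + 1) - ipowa p - / 2 * (powa (p + 1) + powa p).
Definition dbcoef_fun p := powa (p + 1) - powa p - / 2 * (dpowa (p + 1) + dpowa p).
Definition ccoef_fun p := acoef_fun p + bcoef_fun (p + 1) - bcoef_fun p.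

Ltac derive_Rpower :=
  auto_derive; [repeat split; apply ex_derive_Rpower; lra|];
  rewrite ?Derive_Rpower by lra;
  try replace (1 - al - 1) with (- al) by ring;
  try replace (2 - al - 1) with (1 - al) by ring.

Lemma is_derive_powa x : 0 < x -> is_derive powa x (dpowa x).
Proof. intros. unfold powa, dpowa. derive_Rpower. ring. Qed.

Lemma is_derive_dpowa x : 0 < x -> is_derive dpowa x (d2powa x).
Proof. intros. unfold dpowa, d2powa. derive_Rpower. ring. Qed.

Lemma dpowa_antimono x y : 0 < x <= y -> dpowa y <= dpowa x.
Proof. intros. apply Rmult_le_compat_l; [lra | apply Rpower_le_neg; lra]. Qed.

Lemma d2powa_mono x y : 0 < x <= y -> d2powa x <= d2powa y.
Proof.
  intros. unfold d2powa.
  assert (Rpower y (- al - 1) <= Rpower x (- al - 1)) by (apply Rpower_le_neg; lra).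
  assert (0 < (1 - al) * al) by nra. nra.
Qed.

Lemma powa_diff_bounds p q : 0 < p < q ->
  dpowa q * (q - p) <= powa q - powa p <= dpowa p * (q - p).
Proof.
  intros Hpq. destruct (mean_value powa dpowa p q) as [c [Hc ->]];
    [lra | intros; apply is_derive_powa; lra|].
  assert (dpowa q <= dpowa c) by (apply dpowa_antimono; lra).
  assert (dpowa c <= dpowa p) by (apply dpowa_antimono; lra).
  split; nra.
Qed.

Lemma dpowa_diff_bounds p q : 0 < p < q ->
  d2powa p * (q - p) <= dpowa q - dpowa p <= d2powa q * (q - p).
Proof.
  intros Hpq. destruct (mean_value dpowa d2powa p q) as [c [Hc ->]];
    [lra | intros; apply is_derive_dpowa; lra|].
  assert (d2powa c <= d2powa q) by (apply d2powa_mono; lra).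
  assert (d2powa p <= d2powa c) by (apply d2powa_mono; lra).
  split; nra.
Qed.

Lemma acoef_fun_bounds p : 0 < p -> dpowa (p + 1) <= acoef_fun p <= dpowa p.
Proof.
  intros. unfold acoef_fun. pose proof (powa_diff_bounds p (p + 1)).
  replace (p + 1 - p) with 1 in H0 by ring. lra.
Qed.

(* The trapezoidal rule underestimates the integral of the concave function powa. *)
Lemma bcoef_fun_nonneg p : 0 < p -> 0 <= bcoef_fun p.
Proof.
  intros Hp.
  set (phi := fun x => / (2 - al) * Rpower x (2 - al) - / (2 - al) * Rpower p (2 - al)
                       - (x - p) / 2 * (Rpower p (1 - al) + Rpower x (1 - al))).
  set (dphi := fun x => Rpower x (1 - al) - / 2 * (Rpower p (1 - al) + Rpower x (1 - al))
                        - (x - p) / 2 * ((1 - al) * Rpower x (- al))).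
  assert (phi p <= phi (p + 1)).
  { apply (le_of_derive_nonneg phi dphi); [lra | |].
    - intros c Hc. unfold phi, dphi. derive_Rpower. field. lra.
    - intros c Hc. unfold dphi. pose proof (powa_diff_bounds p c ltac:(lra)).
      unfold powa, dpowa in H. nra. }
  unfold phi, bcoef_fun, ipowa, powa in *.
  replace (p - p) with 0 in H by ring. replace (p + 1 - p) with 1 in H by ring. lra.
Qed.

Lemma is_derive_bcoef_fun p : 0 < p -> is_derive bcoef_fun p (dbcoef_fun p).
Proof. intros. unfold bcoef_fun, dbcoef_fun, ipowa, powa, dpowa. derive_Rpower. field. lra. Qed.

Lemma dbcoef_fun_nonpos p : 0 < p -> dbcoef_fun p <= 0.
Proof.
  intros Hp.
  set (psi := fun x => - (Rpower x (1 - al) - Rpower p (1 - al)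
    - (x - p) / 2 * ((1 - al) * Rpower p (- al) + (1 - al) * Rpower x (- al)))).
  set (dpsi := fun x => - ((1 - al) * Rpower x (- al)
    - / 2 * ((1 - al) * Rpower p (- al) + (1 - al) * Rpower x (- al))
    - (x - p) / 2 * ((1 - al) * (- al) * Rpower x (- al - 1)))).
  assert (psi p <= psi (p + 1)).
  { apply (le_of_derive_nonneg psi dpsi); [lra | |].
    - intros c Hc. unfold psi, dpsi. derive_Rpower. field.
    - intros c Hc. unfold dpsi. pose proof (dpowa_diff_bounds p c ltac:(lra)).
      unfold dpowa, d2powa in H. nra. }
  unfold psi, dbcoef_fun, powa, dpowa in *.
  replace (p - p) with 0 in H by ring. replace (p + 1 - p) with 1 in H by ring. lra.
Qed.

Lemma bcoef_fun_succ_le p : 0 < p -> bcoef_fun (p + 1) <= bcoef_fun p.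
Proof.
  intros Hp. apply (le_of_derive_nonpos bcoef_fun dbcoef_fun); [lra | |].
  - intros c Hc. apply is_derive_bcoef_fun. lra.
  - intros c Hc. apply dbcoef_fun_nonpos. lra.
Qed.

Lemma ccoef_fun_succ_le p : 0 < p -> ccoef_fun (p + 1) <= ccoef_fun p.
Proof.
  intros Hp.
  apply (le_of_derive_nonpos ccoef_fun
           (fun x => dpowa (x + 1) - dpowa x + (dbcoef_fun (x + 1) - dbcoef_fun x)));
    [lra | |].
  - intros c Hc. unfold ccoef_fun, acoef_fun, bcoef_fun, dbcoef_fun, ipowa, powa, dpowa.
    derive_Rpower. field. lra.
  - intros c Hc. unfold dbcoef_fun.
    pose proof (dpowa_diff_bounds c (c + 1) ltac:(lra)).
    pose proof (dpowa_diff_bounds (c + 1) (c + 1 + 1) ltac:(lra)).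
    pose proof (powa_diff_bounds c (c + 1) ltac:(lra)).
    pose proof (powa_diff_bounds (c + 1) (c + 1 + 1) ltac:(lra)).
    replace (c + 1 - c) with 1 in * by ring. replace (c + 1 + 1 - (c + 1)) with 1 in * by ring.
    lra.
Qed.

Lemma acoef_fun_sub_bcoef_fun_ge p : 0 < p -> dpowa (p + 1) <= acoef_fun p - bcoef_fun p.
Proof.
  intros Hp.
  set (chi := fun x => (x - p + / 2) * Rpower x (1 - al) - / 2 * Rpower p (1 - al)
    - / (2 - al) * Rpower x (2 - al) + / (2 - al) * Rpower p (2 - al)
    - (1 - al) * Rpower (p + 1) (- al) * ((x - p) / 2 + (x - p) ^ 2 / 2)).
  set (dchi := fun x => (x - p + / 2) * ((1 - al) * Rpower x (- al) - (1 - al) * Rpower (p + 1) (- al))).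
  assert (chi p <= chi (p + 1)).
  { apply (le_of_derive_nonneg chi dchi); [lra | |].
    - intros c Hc. unfold chi, dchi. derive_Rpower. field. lra.
    - intros c Hc. unfold dchi. pose proof (dpowa_antimono c (p + 1) ltac:(lra)).
      unfold dpowa in H. apply Rmult_le_pos; lra. }
  unfold chi, acoef_fun, bcoef_fun, ipowa, powa, dpowa in *.
  replace (p - p) with 0 in H by ring. replace (p + 1 - p) with 1 in H by ring. lra.
Qed.

End CoefficientFunctions.

Section L21sigmaCoefficients.

Variable al : R.
Hypothesis Hal : 0 < al < 1.

Let s := sig al.

Lemma sig_bounds : 1 / 2 < s < 1.
Proof. unfold s, sig. lra. Qed.

Lemma INR_add_sig_pos m : 0 < INR m + s.
Proof. pose proof (pos_INR m); pose proof sig_bounds; lra. Qed.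

Lemma acoef_S l : acoef al (S l) = acoef_fun al (INR l + s).
Proof. unfold acoef, acoef_fun, powa. rewrite S_INR. fold s. f_equal; f_equal; ring. Qed.

Lemma bcoef_S l : bcoef al (S l) = bcoef_fun al (INR l + s).
Proof.
  unfold bcoef, bcoef_fun, ipowa, powa. rewrite S_INR. fold s.
  replace (INR l + 1 + s) with (INR l + s + 1) by ring.
  replace (INR l + 1 - 1 + s) with (INR l + s) by ring. ring.
Qed.

Lemma powa_sig : powa al s = s * Rpower s (- al).
Proof.
  unfold powa. replace (1 - al) with (1 + - al) by ring.
  rewrite Rpower_plus, Rpower_1; [reflexivity | pose proof sig_bounds; lra].
Qed.

Lemma dpowa_sig_le : dpowa al s <= powa al s.
Proof. rewrite powa_sig. unfold dpowa. pose proof (Rpower_pos s (- al)). unfold s, sig in *. nra. Qed.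

Lemma sig_sq_dpowa_le : s ^ 2 * dpowa al s <= (1 - al) * powa al s.
Proof.
  rewrite powa_sig. unfold dpowa. pose proof (Rpower_pos s (- al)). pose proof sig_bounds.
  assert (0 <= (s - s ^ 2) * ((1 - al) * Rpower s (- al))) by (apply Rmult_le_pos; nra).
  nra.
Qed.

Lemma ccoef_S_0 j : ccoef al (S j) 0 = powa al s + bcoef_fun al s.
Proof.
  unfold ccoef; cbn [Nat.eqb]. change 1%nat with (S 0). rewrite bcoef_S.
  simpl INR. rewrite Rplus_0_l. reflexivity.
Qed.

Lemma ccoef_S_mid j m : (S m < S j)%nat -> ccoef al (S j) (S m) = ccoef_fun al (INR m + s).
Proof.
  intros Hm. unfold ccoef; cbn [Nat.eqb].
  rewrite (proj2 (Nat.ltb_lt _ _) Hm), acoef_S, !bcoef_S. unfold ccoef_fun.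
  rewrite S_INR. do 3 f_equal. ring.
Qed.

Lemma ccoef_S_diag j : ccoef al (S j) (S j) = acoef_fun al (INR j + s) - bcoef_fun al (INR j + s).
Proof.
  unfold ccoef; cbn [Nat.eqb]. rewrite Nat.ltb_irrefl, acoef_S, bcoef_S. reflexivity.
Qed.

Lemma ccoef_succ_le j m : (m < j)%nat -> ccoef al j (S m) <= ccoef al j m.
Proof.
  intros Hm. destruct j as [|j]; [lia|].
  assert (Hs : 0 < s) by (pose proof sig_bounds; lra).
  destruct m as [|m].
  - rewrite ccoef_S_0.
    pose proof (bcoef_fun_nonneg al Hal s Hs). pose proof (acoef_fun_bounds al Hal s Hs).
    pose proof dpowa_sig_le.
    destruct j as [|j].
    + rewrite ccoef_S_diag. simpl. rewrite Rplus_0_l. lra.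
    + rewrite ccoef_S_mid by lia. simpl. rewrite Rplus_0_l. unfold ccoef_fun.
      pose proof (bcoef_fun_succ_le al Hal s Hs). lra.
  - rewrite (ccoef_S_mid j m) by lia.
    assert (Hc := ccoef_fun_succ_le al Hal (INR m + s) (INR_add_sig_pos m)).
    replace (INR (S m) + s) with (INR m + s + 1) by (rewrite S_INR; ring).
    destruct (Nat.eq_dec (S (S m)) (S j)) as [E|E].
    + rewrite E, ccoef_S_diag. injection E as <-.
      replace (INR (S m) + s) with (INR m + s + 1) by (rewrite S_INR; ring).
      pose proof (INR_add_sig_pos m).
      pose proof (bcoef_fun_nonneg al Hal (INR m + s + 1 + 1) ltac:(lra)).
      unfold ccoef_fun in *. lra.
    + rewrite ccoef_S_mid by lia. replace (INR (S m) + s) with (INR m + s + 1) by (rewrite S_INR; ring).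
      exact Hc.
Qed.

Lemma ccoef_diag_ge j : (1 - al) * Rpower (INR j + 1) (- al) <= ccoef al j j.
Proof.
  destruct j as [|j].
  - unfold ccoef. change (acoef al 0) with (powa al s). rewrite powa_sig.
    simpl INR. rewrite Rplus_0_l, Rpower_1_l. pose proof sig_bounds.
    assert (Rpower 1 (- al) <= Rpower s (- al)) by (apply Rpower_le_neg; lra).
    rewrite Rpower_1_l in H0. unfold s, sig in *. nra.
  - rewrite ccoef_S_diag. pose proof (acoef_fun_sub_bcoef_fun_ge al Hal (INR j + s) (INR_add_sig_pos j)).
    unfold dpowa in H.
    assert (Rpower (INR (S j) + 1) (- al) <= Rpower (INR j + s + 1) (- al)).
    { apply Rpower_le_neg; [|lra]. rewrite S_INR.
      pose proof (INR_add_sig_pos j). pose proof sig_bounds. lra. }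
    nra.
Qed.

Lemma ccoef_1_le j : (1 <= j)%nat -> s ^ 2 * ccoef al j 1 <= (2 * s - 1) * ccoef al j 0.
Proof.
  intros Hj. destruct j as [|j]; [lia|]. rewrite ccoef_S_0.
  assert (Hs : 0 < s) by (pose proof sig_bounds; lra).
  pose proof (bcoef_fun_nonneg al Hal s Hs). pose proof (acoef_fun_bounds al Hal s Hs).
  pose proof sig_sq_dpowa_le.
  assert (ccoef al (S j) 1 <= acoef_fun al s).
  { change 1%nat with (S 0). destruct j as [|j].
    - rewrite ccoef_S_diag. simpl. rewrite Rplus_0_l. lra.
    - rewrite ccoef_S_mid by lia. simpl. rewrite Rplus_0_l. unfold ccoef_fun.
      pose proof (bcoef_fun_succ_le al Hal s Hs). lra. }
  replace (2 * s - 1) with (1 - al) by (unfold s, sig; field).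
  pose proof (pow2_ge_0 s). nra.
Qed.

Lemma ccoef_diag_le j m : (m <= j)%nat -> ccoef al j j <= ccoef al j m.
Proof.
  intros Hm. replace m with (j - (j - m))%nat by lia.
  induction (j - m)%nat as [|d IH]; [rewrite Nat.sub_0_r; lra|].
  destruct (le_lt_dec j d).
  - replace (j - S d)%nat with (j - d)%nat by lia. exact IH.
  - eapply Rle_trans; [exact IH|]. replace (j - d)%nat with (S (j - S d)) by lia.
    apply ccoef_succ_le; lia.
Qed.

Lemma ccoef_pos j m : (m <= j)%nat -> 0 < ccoef al j m.
Proof.
  intros Hm. eapply Rlt_le_trans; [|apply ccoef_diag_le; exact Hm].
  eapply Rlt_le_trans; [|apply ccoef_diag_ge].
  apply Rmult_lt_0_compat; [lra | apply Rpower_pos].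
Qed.

End L21sigmaCoefficients.

Lemma sumR_weighted_diff_last n (p y : nat -> R) :
  sumR (S (S n)) (fun s => p (S n - s)%nat * (y (S s) - y s)) =
  sumR (S n) (fun s => p (S (n - s)) * (y (S s) - y s)) + p 0%nat * (y (S (S n)) - y (S n)).
Proof.
  rewrite sumR_S, Nat.sub_diag. f_equal.
  apply sumR_ext. intros k Hk. do 2 f_equal. lia.
Qed.

(* Abel summation: with decreasing weights the sum can only decrease when y_1, ..., y_n are
   all raised to their bound A. *)
Lemma sumR_weighted_diff_ge n : forall (p y : nat -> R) A,
  (forall m, (m < n)%nat -> p (S m) <= p m) -> (forall k, (1 <= k <= n)%nat -> y k <= A) ->
  p 0%nat * y (S n) - (p 0%nat - p n) * A - p n * y 0%nat
  <= sumR (S n) (fun s => p (n - s)%nat * (y (S s) - y s)).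
Proof.
  induction n as [|n IH]; intros p y A Hp Hy; [simpl; lra|].
  rewrite sumR_weighted_diff_last.
  assert (IHn := IH (fun m => p (S m)) y A ltac:(intros; apply Hp; lia) ltac:(intros; apply Hy; lia)).
  cbv beta in IHn.
  assert (y (S n) <= A) by (apply Hy; lia).
  assert (p 1%nat <= p 0%nat) by (apply Hp; lia).
  assert ((p 0%nat - p 1%nat) * y (S n) <= (p 0%nat - p 1%nat) * A) by (apply Rmult_le_compat_l; lra).
  lra.
Qed.

(* Alikhanov's inequality, written with y_k = - (v_k - v^(sg))^2 so that it becomes an
   instance of the Abel bound with A = 0. *)
Lemma alikhanov_ineq n (p v : nat -> R) sg :
  1 / 2 <= sg <= 1 ->
  (forall m, (m < n)%nat -> p (S m) <= p m) -> 0 <= p n ->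
  ((1 <= n)%nat -> sg ^ 2 * p 1%nat <= (2 * sg - 1) * p 0%nat) ->
  / 2 * sumR (S n) (fun s => p (n - s)%nat * (v (S s) ^ 2 - v s ^ 2)) <=
  (sg * v (S n) + (1 - sg) * v n) * sumR (S n) (fun s => p (n - s)%nat * (v (S s) - v s)).
Proof.
  intros Hsg Hp Hpn Hp01. set (vs := sg * v (S n) + (1 - sg) * v n).
  set (y := fun k => - (v k - vs) ^ 2).
  assert (E : vs * sumR (S n) (fun s => p (n - s)%nat * (v (S s) - v s))
              - / 2 * sumR (S n) (fun s => p (n - s)%nat * (v (S s) ^ 2 - v s ^ 2))
            = / 2 * sumR (S n) (fun s => p (n - s)%nat * (y (S s) - y s))).
  { rewrite <- !sumR_scal, <- sumR_sub. apply sumR_ext. intros; unfold y; field. }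
  assert (0 <= sumR (S n) (fun s => p (n - s)%nat * (y (S s) - y s))); [|lra].
  destruct n as [|n].
  - simpl. unfold y, vs.
    replace (_ + _) with (p 0%nat * (2 * sg - 1) * (v 1%nat - v 0%nat) ^ 2) by ring.
    apply Rmult_le_pos; [apply Rmult_le_pos; lra | apply pow2_ge_0].
  - rewrite sumR_weighted_diff_last.
    assert (G := sumR_weighted_diff_ge n (fun m => p (S m)) y 0 ltac:(intros; apply Hp; lia)
      ltac:(intros; unfold y; pose proof (pow2_ge_0 (v k - vs)); lra)).
    cbv beta in G.
    assert (0 <= p (S n) * - y 0%nat)
      by (apply Rmult_le_pos; auto; unfold y; pose proof (pow2_ge_0 (v 0%nat - vs)); lra).
    specialize (Hp01 ltac:(lia)).
    unfold y, vs in *.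
    replace (v (S (S n)) - (sg * v (S (S n)) + (1 - sg) * v (S n)))
      with ((1 - sg) * (v (S (S n)) - v (S n))) in * by ring.
    replace (v (S n) - (sg * v (S (S n)) + (1 - sg) * v (S n)))
      with (- sg * (v (S (S n)) - v (S n))) in * by ring.
    set (w := v (S (S n)) - v (S n)) in *.
    assert (0 <= w ^ 2 * ((2 * sg - 1) * p 0%nat - sg ^ 2 * p 1%nat))
      by (apply Rmult_le_pos; [apply pow2_ge_0 | lra]).
    nra.
Qed.

Lemma Delta_t_sq_le al tau G2 j v : 0 < al < 1 -> 0 < G2 ->
  / 2 * Delta_t al tau G2 j (fun s => v s ^ 2)
  <= (sig al * v (S j) + (1 - sig al) * v j) * Delta_t al tau G2 j v.
Proof.
  intros Hal HG. unfold Delta_t.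
  assert (0 <= Rpower tau (- al) / G2)
    by (apply Rlt_le, Rdiv_lt_0_compat; [apply Rpower_pos | exact HG]).
  assert (A := alikhanov_ineq j (ccoef al j) v (sig al) ltac:(unfold sig; lra)
    (fun m Hm => ccoef_succ_le al Hal j m Hm) ltac:(apply Rlt_le, ccoef_pos; auto)
    (ccoef_1_le al Hal j)).
  apply (Rmult_le_compat_l (Rpower tau (- al) / G2)) in A; [|assumption].
  lra.
Qed.

Lemma Rpower_tstep_le_ccoef_diag al T M m : 0 < al < 1 -> 0 < T -> (m < M)%nat ->
  Rpower (tstep T M) al <= ccoef al m m * (Rpower T al / (1 - al)).
Proof.
  intros Hal HT Hm.
  assert (Hm1 : 0 < INR m + 1) by (pose proof (pos_INR m); lra).
  assert (Htau : 0 < tstep T M) by (apply Rdiv_lt_0_compat; [lra | apply lt_0_INR; lia]).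
  assert (Hstep : tstep T M * (INR m + 1) <= T).
  { unfold tstep. rewrite <- S_INR.
    assert (INR (S m) <= INR M) by (apply le_INR; lia).
    assert (0 < INR M) by (apply lt_0_INR; lia).
    apply (Rmult_le_reg_r (INR M)); [lra|]. field_simplify; [nra | lra]. }
  assert (Hpow : Rpower (tstep T M) al * Rpower (INR m + 1) al <= Rpower T al)
    by (rewrite Rpower_mult_distr by lra; apply Rle_Rpower_l; nra).
  assert (Hinv : Rpower (INR m + 1) (- al) * Rpower (INR m + 1) al = 1)
    by (rewrite <- Rpower_plus, Rplus_opp_l; apply Rpower_O; lra).
  pose proof (ccoef_diag_ge al Hal m). pose proof (Rpower_pos (INR m + 1) (- al)).
  apply (Rmult_le_reg_l (1 - al)); [lra|].
  replace ((1 - al) * (ccoef al m m * (Rpower T al / (1 - al)))) with (ccoef al m m * Rpower T al)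
    by (field; lra).
  replace (Rpower (tstep T M) al)
    with (Rpower (INR m + 1) (- al) * (Rpower (tstep T M) al * Rpower (INR m + 1) al))
    by (rewrite <- Rmult_assoc, (Rmult_comm (Rpower (INR m + 1) (- al))), Rmult_assoc, Hinv; ring).
  apply Rle_trans with ((1 - al) * Rpower (INR m + 1) (- al) * Rpower T al).
  - rewrite Rmult_assoc. apply Rmult_le_compat_l; [lra|]. apply Rmult_le_compat_l; lra.
  - apply Rmult_le_compat_r; [apply Rlt_le, Rpower_pos | assumption].
Qed.

Lemma gronwall_const_nonneg al T G2 : 0 < al < 1 -> 0 < T -> 0 < G2 ->
  0 <= G2 * Rpower T al / (1 - al).
Proof.
  intros. apply Rlt_le, Rdiv_lt_0_compat; [apply Rmult_lt_0_compat; [lra | apply Rpower_pos] | lra].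
Qed.

Lemma Delta_t_gronwall al T G2 M (Y : nat -> R) D :
  0 < al < 1 -> 0 < T -> 0 < G2 -> 0 <= D -> Y 0%nat = 0 ->
  (forall m, (m < M)%nat -> Delta_t al (tstep T M) G2 m Y <= D) ->
  forall k, (k <= M)%nat -> Y k <= G2 * Rpower T al / (1 - al) * D.
Proof.
  intros Hal HT HG HD HY0 HDelta.
  set (K := G2 * Rpower T al / (1 - al)).
  assert (HK : 0 <= K) by (apply gronwall_const_nonneg; assumption).
  intros k. induction k as [k IH] using lt_wf_ind. intros Hk.
  destruct k as [|m]; [rewrite HY0; apply Rmult_le_pos; assumption|].
  set (Sm := sumR (S m) (fun s => ccoef al m (m - s) * (Y (S s) - Y s))).
  assert (HSm : Sm <= G2 * Rpower (tstep T M) al * D).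
  { specialize (HDelta m ltac:(lia)). unfold Delta_t in HDelta. fold Sm in HDelta.
    assert (Hinv : Rpower (tstep T M) al * Rpower (tstep T M) (- al) = 1)
      by (rewrite <- Rpower_plus, Rplus_opp_r; apply Rpower_O;
          apply Rdiv_lt_0_compat; [lra | apply lt_0_INR; lia]).
    apply (Rmult_le_compat_l (G2 * Rpower (tstep T M) al)) in HDelta;
      [|apply Rmult_le_pos; [lra | apply Rlt_le, Rpower_pos]].
    replace (G2 * Rpower (tstep T M) al * (Rpower (tstep T M) (- al) / G2 * Sm))
      with (Sm * (Rpower (tstep T M) al * Rpower (tstep T M) (- al))) in HDelta by (field; lra).
    rewrite Hinv, Rmult_1_r in HDelta. exact HDelta. }
  assert (HAbel := sumR_weighted_diff_ge m (ccoef al m) Y (K * D)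
    (fun q Hq => ccoef_succ_le al Hal m q Hq) ltac:(intros; apply IH; lia)).
  fold Sm in HAbel. rewrite HY0, Rmult_0_r, Rminus_0_r in HAbel.
  assert (Hdiag : G2 * Rpower (tstep T M) al <= ccoef al m m * K).
  { unfold K. pose proof (Rpower_tstep_le_ccoef_diag al T M m Hal HT ltac:(lia)).
    replace (ccoef al m m * (G2 * Rpower T al / (1 - al)))
      with (G2 * (ccoef al m m * (Rpower T al / (1 - al)))) by (field; lra).
    apply Rmult_le_compat_l; lra. }
  assert (Hc0 : 0 < ccoef al m 0) by (apply ccoef_pos; auto; lia).
  apply (Rmult_le_reg_l (ccoef al m 0)); [exact Hc0|].
  apply (Rmult_le_compat_r D) in Hdiag; [|exact HD].
  nra.
Qed.

Lemma RiemannInt_ge_const (g : R -> R) c d m (pr : Riemann_integrable g c d) :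
  c <= d -> (forall x, c < x < d -> m <= g x) -> m * (d - c) <= RiemannInt pr.
Proof.
  intros Hcd Hg. rewrite <- (RiemannInt_P15 (RiemannInt_P14 c d m)).
  apply RiemannInt_P19; [exact Hcd | intros; apply Hg; assumption].
Qed.

(* The integrand is nonnegative and at least e^(-2) on [1, 2], so every truncated integral
   over [c, d] with c <= 1 and 2 <= d is at least e^(-2). *)
Lemma is_Gamma_pos z G : 1 <= z -> is_Gamma z G -> 0 < G.
Proof.
  intros Hz HG. set (g := fun s => Rpower s (z - 1) * exp (- s)).
  set (eps := exp (- 2) / 2). assert (He : 0 < eps) by (unfold eps; pose proof (exp_pos (- 2)); lra).
  destruct (HG eps He) as [del [L [Hdel Hint]]].
  set (c := Rmin (del / 2) (1 / 2)); set (d := Rmax L 2 + 1).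
  assert (Hc : 0 < c < del /\ c < 1) by (unfold c, Rmin; destruct (Rle_dec (del / 2) (1 / 2)); lra).
  assert (Hd : L < d /\ 2 < d) by (unfold d; pose proof (Rmax_l L 2); pose proof (Rmax_r L 2); lra).
  destruct (Hint c d ltac:(lra) ltac:(lra) ltac:(lra)) as [pr Hpr]. fold g in pr, Hpr.
  assert (pr1 : Riemann_integrable g c 2) by (apply (RiemannInt_P22 pr); lra).
  assert (pr2 : Riemann_integrable g 2 d) by (apply (RiemannInt_P23 pr); lra).
  assert (pr3 : Riemann_integrable g c 1) by (apply (RiemannInt_P22 pr1); lra).
  assert (pr4 : Riemann_integrable g 1 2) by (apply (RiemannInt_P23 pr1); lra).
  rewrite <- (RiemannInt_P26 pr1 pr2 pr), <- (RiemannInt_P26 pr3 pr4 pr1) in Hpr.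
  assert (Hg : forall x, 0 <= g x)
    by (intros; apply Rmult_le_pos; apply Rlt_le; [apply Rpower_pos | apply exp_pos]).
  assert (I2 := RiemannInt_ge_const g 2 d 0 pr2 ltac:(lra) ltac:(intros; apply Hg)).
  assert (I3 := RiemannInt_ge_const g c 1 0 pr3 ltac:(lra) ltac:(intros; apply Hg)).
  assert (I4 : exp (- 2) * (2 - 1) <= RiemannInt pr4).
  { apply RiemannInt_ge_const; [lra|]. intros x Hx. unfold g.
    assert (Rpower 1 (z - 1) <= Rpower x (z - 1)) by (apply Rle_Rpower_l; lra).
    rewrite Rpower_1_l in H.
    assert (exp (- 2) <= exp (- x)) by (apply Rlt_le, exp_increasing; lra).
    pose proof (exp_pos (- 2)). nra. }
  apply Rabs_def2 in Hpr. unfold eps in *. lra.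
Qed.

Lemma Delta_t_sub al tau G2 j v w :
  Delta_t al tau G2 j (fun s => v s - w s) = Delta_t al tau G2 j v - Delta_t al tau G2 j w.
Proof.
  unfold Delta_t. rewrite <- Rmult_minus_distr_l, <- sumR_sub.
  f_equal. apply sumR_ext; intros; ring.
Qed.

Lemma Delta_t_sumR al tau G2 j n (F : nat -> nat -> R) :
  Delta_t al tau G2 j (fun s => sumR n (fun k => F s k))
  = sumR n (fun k => Delta_t al tau G2 j (fun s => F s k)).
Proof.
  unfold Delta_t. rewrite sumR_scal, <- sumR_comm. f_equal.
  apply sumR_ext; intros s _. rewrite <- sumR_sub, <- sumR_scal. reflexivity.
Qed.

Lemma delta_h_sub al be a b T gam dp dm N M j (z v w : nat -> R) i :
  (forall k, z k = v k - w k) ->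
  delta_h al be a b T gam dp dm N M j z i
  = delta_h al be a b T gam dp dm N M j v i - delta_h al be a b T gam dp dm N M j w i.
Proof.
  intros Hz. unfold delta_h. rewrite !Hz.
  rewrite (sumR_ext (i + 2) _ (fun k => omega be k * v (i + 1 - k)%nat - omega be k * w (i + 1 - k)%nat)),
    (sumR_ext (N - i + 2) _ (fun k => omega be k * v (i + k - 1)%nat - omega be k * w (i + k - 1)%nat)),
    !sumR_sub by (intros; rewrite Hz; ring).
  unfold Rdiv. ring.
Qed.

Fixpoint maxR (n : nat) (Y : nat -> R) : R :=
  match n with O => Y 0%nat | S n' => Rmax (maxR n' Y) (Y (S n')) end.

Lemma maxR_ge n Y m : (m <= n)%nat -> Y m <= maxR n Y.
Proof.
  induction n as [|n IH]; intros Hm; [replace m with 0%nat by lia; simpl; lra|].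
  simpl. destruct (Nat.eq_dec m (S n)) as [->|Hne]; [apply Rmax_r|].
  eapply Rle_trans; [apply IH; lia | apply Rmax_l].
Qed.

Lemma maxR_attained n Y : exists m, (m <= n)%nat /\ maxR n Y = Y m.
Proof.
  induction n as [|n [m [Hm E]]]; [exists 0%nat; auto|].
  simpl. rewrite E. unfold Rmax. destruct (Rle_dec (Y m) (Y (S n))).
  - exists (S n); auto.
  - exists m; auto.
Qed.

Lemma sq_convex_comb_le sg x y : 0 <= sg <= 1 ->
  (sg * x + (1 - sg) * y) ^ 2 <= sg * x ^ 2 + (1 - sg) * y ^ 2.
Proof.
  intros. assert (0 <= sg * (1 - sg) * (x - y) ^ 2) by (apply Rmult_le_pos; [nra | apply pow2_ge_0]).
  nra.
Qed.

Lemma sqrt_le_of_le_mul_sqrt W c : 0 <= W -> 0 <= c -> W <= sqrt W * c -> sqrt W <= c.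
Proof.
  intros HW Hc H. rewrite <- (sqrt_sqrt W HW) in H at 1.
  destruct (Req_dec (sqrt W) 0) as [->|Hne]; [assumption|].
  apply (Rmult_le_reg_l (sqrt W)); [pose proof (sqrt_pos W); lra | exact H].
Qed.


Lemma gnorm_le h N v W : 0 <= h -> sumR (N - 1) (fun k => v (S k) ^ 2) <= W ->
  gnorm h N v <= sqrt h * sqrt W.
Proof.
  intros Hh Hv. unfold gnorm.
  rewrite <- sqrt_mult by (pose proof (sumR_sq_nonneg (N - 1) (fun k => v (S k))); lra).
  apply sqrt_le_1_alt, Rmult_le_compat_l; assumption.
Qed.


Lemma energy_step al be a b T gam dp dm N M G2 j (E : nat -> nat -> R) (Rt : nat -> R) W B :
  0 < al < 1 -> 1 < be < 2 -> a < b -> (5 <= N)%nat -> 0 < G2 ->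
  0 <= dp (tgs al T M j) -> 0 <= dm (tgs al T M j) ->
  E j 0%nat = 0 -> E j N = 0 -> E (S j) 0%nat = 0 -> E (S j) N = 0 ->
  (forall i, (1 <= i <= N - 1)%nat ->
     Delta_t al (tstep T M) G2 j (fun s => E s i)
     = delta_h al be a b T gam dp dm N M j (fun k => sig al * E (S j) k + (1 - sig al) * E j k) i
       + Rt i) ->
  (forall i, (1 <= i <= N - 1)%nat -> Rabs (Rt i) <= B) ->
  sumR (N - 1) (fun k => E j (S k) ^ 2) <= W -> sumR (N - 1) (fun k => E (S j) (S k) ^ 2) <= W ->
  Delta_t al (tstep T M) G2 j (fun s => sumR (N - 1) (fun k => E s (S k) ^ 2))
  <= 2 * (sqrt W * (sqrt (INR (N - 1)) * B)).
Proof.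
  intros Hal Hbe Hab HN HG Hdp Hdm Hj0 HjN HSj0 HSjN Heq HRt HWj HWSj.
  set (es := fun k => sig al * E (S j) k + (1 - sig al) * E j k).
  assert (HB : 0 <= B) by (pose proof (HRt 1%nat ltac:(lia)); pose proof (Rabs_pos (Rt 1%nat)); lra).
  assert (Hpoint : forall k, (k < N - 1)%nat ->
    / 2 * Delta_t al (tstep T M) G2 j (fun s => E s (S k) ^ 2)
    <= es (S k) * delta_h al be a b T gam dp dm N M j es (S k) + es (S k) * Rt (S k)).
  { intros k Hk. rewrite <- Rmult_plus_distr_l.
    assert (Hk' := Heq (S k) ltac:(lia)). fold es in Hk'. rewrite <- Hk'.
    apply Delta_t_sq_le; assumption. }
  assert (Hdiss : sumR (N - 1) (fun k => es (S k) * delta_h al be a b T gam dp dm N M j es (S k)) <= 0)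
    by (apply delta_h_dissipative; auto; unfold es; [rewrite Hj0, HSj0 | rewrite HjN, HSjN]; ring).
  assert (Hes : sumR (N - 1) (fun k => es (S k) ^ 2) <= W).
  { apply Rle_trans
      with (sumR (N - 1) (fun k => sig al * E (S j) (S k) ^ 2 + (1 - sig al) * E j (S k) ^ 2)).
    - apply sumR_le; intros. apply sq_convex_comb_le. unfold sig; lra.
    - rewrite sumR_add, !sumR_scal. unfold sig in *. nra. }
  assert (HRt2 : sumR (N - 1) (fun k => Rt (S k) ^ 2) <= INR (N - 1) * B ^ 2).
  { rewrite <- sumR_const. apply sumR_le; intros k Hk.
    specialize (HRt (S k) ltac:(lia)). rewrite <- (pow2_abs (Rt (S k))).
    pose proof (Rabs_pos (Rt (S k))). nra. }
  assert (HCS : sumR (N - 1) (fun k => es (S k) * Rt (S k)) <= sqrt W * (sqrt (INR (N - 1)) * B)).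
  { eapply Rle_trans; [apply sumR_cauchy_schwarz|].
    apply Rmult_le_compat; try apply sqrt_pos; [apply sqrt_le_1_alt; exact Hes|].
    rewrite <- (sqrt_pow2 B HB), <- sqrt_mult by (apply pos_INR || apply pow2_ge_0).
    apply sqrt_le_1_alt; exact HRt2. }
  rewrite Delta_t_sumR.
  assert (/ 2 * sumR (N - 1) (fun k => Delta_t al (tstep T M) G2 j (fun s => E s (S k) ^ 2))
          <= sumR (N - 1) (fun k => es (S k) * delta_h al be a b T gam dp dm N M j es (S k))
             + sumR (N - 1) (fun k => es (S k) * Rt (S k)))
    by (rewrite <- sumR_scal, <- sumR_add; apply sumR_le; exact Hpoint).
  lra.
Qed.

Definition grid_error (a b T : R) (N M : nat) (u : R -> R -> R) (U : nat -> nat -> R) s i :=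
  u (xg a b N i) (tg T M s) - U s i.

Section ErrorAnalysis.

Variables (alpha beta a b T : R) (gam dp dm : R -> R) (f : R -> R -> R) (phi : R -> R).
Variables (u : R -> R -> R) (G2 : R) (N M : nat) (U : nat -> nat -> R).
Hypotheses (Hal : 0 < alpha < 1) (Hab : a < b) (HT : 0 < T) (HN : (5 <= N)%nat) (HM : (1 <= M)%nat).
Hypotheses (Hsol : solves_problem alpha beta a b T gam dp dm f phi u)
  (Hsch : scheme_solution alpha beta a b T gam dp dm f phi G2 N M U).

Let E := grid_error a b T N M u U.

Lemma tg_bounds s : (s <= M)%nat -> 0 <= tg T M s <= T.
Proof.
  intros Hs. unfold tg, tstep.
  assert (0 < INR M) by (apply lt_0_INR; lia). assert (INR s <= INR M) by (apply le_INR; lia).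
  split; [apply Rmult_le_pos; [apply pos_INR | apply Rlt_le, Rdiv_lt_0_compat; lra]|].
  apply (Rmult_le_reg_r (INR M)); [lra|]. field_simplify; nra.
Qed.

Lemma xg_interior i : (1 <= i <= N - 1)%nat -> a < xg a b N i < b.
Proof.
  intros Hi. unfold xg, hstep.
  assert (0 < INR N) by (apply lt_0_INR; lia).
  assert (INR i < INR N) by (apply lt_INR; lia).
  assert (0 < INR i / INR N < 1).
  { split; [apply Rdiv_lt_0_compat; [apply lt_0_INR; lia | lra]|].
    apply (Rmult_lt_reg_r (INR N)); [lra|]. field_simplify; lra. }
  replace (INR i * ((b - a) / INR N)) with (INR i / INR N * (b - a)) by (field; lra).
  nra.
Qed.

Lemma grid_error_boundary s : (s <= M)%nat -> E s 0%nat = 0 /\ E s N = 0.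
Proof.
  intros Hs. destruct Hsol as [_ [Hbd _]], Hsch as [_ [Ubd _]].
  destruct (Hbd _ (tg_bounds s Hs)) as [Hua Hub], (Ubd s Hs) as [HU0 HUN].
  assert (Hx0 : xg a b N 0 = a) by (unfold xg; simpl; ring).
  assert (HxN : xg a b N N = b)
    by (unfold xg, hstep; field_simplify; [ring | apply not_0_INR; lia]).
  unfold E, grid_error. split; [rewrite Hx0, HU0, Hua | rewrite HxN, HUN, Hub]; ring.
Qed.

Lemma grid_error_initial i : (1 <= i <= N - 1)%nat -> E 0%nat i = 0.
Proof.
  intros Hi. destruct Hsol as [Hinit _], Hsch as [Uinit _].
  unfold E, grid_error, tg. rewrite Uinit by assumption. simpl INR. rewrite Rmult_0_l.
  rewrite Hinit by (apply xg_interior; assumption). ring.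
Qed.

Lemma grid_error_equation j i : (j < M)%nat -> (1 <= i <= N - 1)%nat ->
  Delta_t alpha (tstep T M) G2 j (fun s => E s i)
  = delta_h alpha beta a b T gam dp dm N M j (fun k => sig alpha * E (S j) k + (1 - sig alpha) * E j k) i
    + trunc_err alpha beta a b T gam dp dm f u G2 N M j i.
Proof.
  intros Hj Hi. destruct Hsch as [_ [_ Ueq]].
  unfold E, grid_error. rewrite Delta_t_sub, (delta_h_sub alpha beta a b T gam dp dm N M j _
    (fun k => sig alpha * u (xg a b N k) (tg T M (S j)) + (1 - sig alpha) * u (xg a b N k) (tg T M j))
    (fun k => sig alpha * U (S j) k + (1 - sig alpha) * U j k)) by (intros; ring).
  rewrite Ueq by assumption. unfold trunc_err. ring.
Qed.

Hypotheses (Hbe : 1 < beta < 2) (HG2 : 0 < G2)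
  (Hd : forall t, 0 <= t <= T -> 0 <= dp t /\ 0 <= dm t).
Variable B : R.
Hypothesis HR : forall j i, (j < M)%nat -> (1 <= i <= N - 1)%nat ->
  Rabs (trunc_err alpha beta a b T gam dp dm f u G2 N M j i) <= B.

Let Y s := sumR (N - 1) (fun k => E s (S k) ^ 2).
Let W := maxR M Y.
Let K := G2 * Rpower T alpha / (1 - alpha).

Lemma grid_error_sq_sum_0 : Y 0%nat = 0.
Proof.
  unfold Y. rewrite (sumR_ext _ _ (fun _ => 0)), sumR_const; [ring|].
  intros k Hk. rewrite grid_error_initial by lia. simpl; ring.
Qed.

Lemma grid_error_Delta_t_le m : (m < M)%nat ->
  Delta_t alpha (tstep T M) G2 m Y <= 2 * (sqrt W * (sqrt (INR (N - 1)) * B)).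
Proof.
  intros Hm.
  assert (Hts : 0 <= tgs alpha T M m <= T).
  { pose proof (tg_bounds m ltac:(lia)); pose proof (tg_bounds (S m) ltac:(lia)).
    unfold tg, tgs, sig in *. rewrite S_INR in *.
    assert (0 <= tstep T M) by (apply Rlt_le, Rdiv_lt_0_compat; [lra | apply lt_0_INR; lia]).
    split; nra. }
  destruct (Hd _ Hts) as [Hdp Hdm].
  destruct (grid_error_boundary m ltac:(lia)), (grid_error_boundary (S m) ltac:(lia)).
  apply (energy_step alpha beta a b T gam dp dm N M G2 m E
           (trunc_err alpha beta a b T gam dp dm f u G2 N M m)); try assumption.
  - intros i Hi. apply grid_error_equation; assumption.
  - intros i Hi. apply HR; assumption.
  - apply (maxR_ge M Y); lia.
  - apply (maxR_ge M Y); lia.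
Qed.

Lemma trunc_bound_nonneg : 0 <= B.
Proof.
  pose proof (HR 0%nat 1%nat ltac:(lia) ltac:(lia)).
  pose proof (Rabs_pos (trunc_err alpha beta a b T gam dp dm f u G2 N M 0 1)). lra.
Qed.

Lemma sqrt_maxR_grid_error_le : sqrt W <= 2 * K * (sqrt (INR (N - 1)) * B).
Proof.
  pose proof trunc_bound_nonneg.
  assert (HK : 0 <= K) by (apply gronwall_const_nonneg; assumption).
  assert (Hc : 0 <= sqrt (INR (N - 1)) * B) by (apply Rmult_le_pos; [apply sqrt_pos | assumption]).
  assert (HW : 0 <= W) by (eapply Rle_trans; [apply sumR_sq_nonneg | apply (maxR_ge M Y 0); lia]).
  destruct (maxR_attained M Y) as [m [Hm HWm]].
  assert (HYm := Delta_t_gronwall alpha T G2 M Y (2 * (sqrt W * (sqrt (INR (N - 1)) * B))) Hal HT HG2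
    ltac:(pose proof (sqrt_pos W); nra) grid_error_sq_sum_0 grid_error_Delta_t_le m Hm).
  fold W K in HWm, HYm. rewrite <- HWm in HYm.
  apply sqrt_le_of_le_mul_sqrt; [exact HW | nra |].
  replace (sqrt W * (2 * K * (sqrt (INR (N - 1)) * B)))
    with (K * (2 * (sqrt W * (sqrt (INR (N - 1)) * B)))) by ring.
  exact HYm.
Qed.

Lemma gnorm_grid_error_le j : (j <= M)%nat ->
  gnorm (hstep a b N) N (E j) <= 2 * K * sqrt (b - a) * B.
Proof.
  intros Hj. pose proof trunc_bound_nonneg.
  assert (HK : 0 <= K) by (apply gronwall_const_nonneg; assumption).
  assert (Hh : 0 < hstep a b N) by (apply Rdiv_lt_0_compat; [lra | apply lt_0_INR; lia]).
  assert (Hlen : hstep a b N * INR (N - 1) <= b - a).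
  { unfold hstep. rewrite minus_INR by lia. change (INR 1) with 1.
    assert (0 < INR N) by (apply lt_0_INR; lia).
    replace ((b - a) / INR N * (INR N - 1)) with ((b - a) - (b - a) / INR N) by (field; lra).
    assert (0 <= (b - a) / INR N) by (apply Rlt_le, Rdiv_lt_0_compat; lra). lra. }
  eapply Rle_trans; [apply (gnorm_le _ N (E j) W); [lra | apply (maxR_ge M Y); exact Hj]|].
  apply Rle_trans with (sqrt (hstep a b N) * (2 * K * (sqrt (INR (N - 1)) * B))).
  - apply Rmult_le_compat_l; [apply sqrt_pos | apply sqrt_maxR_grid_error_le].
  - replace (sqrt (hstep a b N) * (2 * K * (sqrt (INR (N - 1)) * B)))
      with (2 * K * B * (sqrt (hstep a b N) * sqrt (INR (N - 1)))) by ring.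
    replace (2 * K * sqrt (b - a) * B) with (2 * K * B * sqrt (b - a)) by ring.
    rewrite <- sqrt_mult by (lra || apply pos_INR).
    apply Rmult_le_compat_l; [nra | apply sqrt_le_1_alt; exact Hlen].
Qed.

End ErrorAnalysis.
Theorem theorem3 (alpha beta a b T : R) (gam dp dm : R -> R)
  (f : R -> R -> R) (phi : R -> R) (u : R -> R -> R) (dstar CR G2 : R) :
  0 < alpha < 1 -> 1 < beta < 2 -> a < b -> 0 < T ->
  (forall t, 0 <= t <= T -> 0 <= dp t /\ 0 <= dm t) ->
  0 < dstar -> (forall t, 0 <= t <= T -> dstar <= dp t + dm t) ->
  solves_problem alpha beta a b T gam dp dm f phi u ->
  is_Gamma (2 - alpha) G2 ->
  (forall (N M j i : nat), (5 <= N)%nat -> (1 <= M)%nat -> (j < M)%nat ->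
     (1 <= i <= N - 1)%nat ->
     Rabs (trunc_err alpha beta a b T gam dp dm f u G2 N M j i)
       <= CR * (tstep T M ^ 2 + hstep a b N ^ 2)) ->
  exists ct, 0 < ct /\
    forall (N M : nat) (U : nat -> nat -> R),
      (5 <= N)%nat -> (1 <= M)%nat ->
      scheme_solution alpha beta a b T gam dp dm f phi G2 N M U ->
      forall j, (j <= M)%nat ->
        gnorm (hstep a b N) N (fun i => u (xg a b N i) (tg T M j) - U j i)
          <= ct * (tstep T M ^ 2 + hstep a b N ^ 2).
Proof.
  intros Hal Hbe Hab HT Hd _ _ Hsol HGamma HR.
  assert (HG2 : 0 < G2) by (apply (is_Gamma_pos (2 - alpha)); [lra | exact HGamma]).
  set (K := G2 * Rpower T alpha / (1 - alpha)).
  assert (HK : 0 <= K) by (apply gronwall_const_nonneg; assumption).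
  assert (HKba : 0 <= 2 * K * sqrt (b - a)) by (pose proof (sqrt_pos (b - a)); nra).
  exists (2 * K * sqrt (b - a) * Rabs CR + 1). split; [pose proof (Rabs_pos CR); nra|].
  intros N M U HN HM Hsch j Hj.
  set (B := CR * (tstep T M ^ 2 + hstep a b N ^ 2)).
  assert (Hgrid := gnorm_grid_error_le alpha beta a b T gam dp dm f phi u G2 N M U
    Hal Hab HT HN HM Hsol Hsch Hbe HG2 Hd B (fun j i => HR N M j i HN HM) j Hj).
  fold K in Hgrid.
  change (grid_error a b T N M u U j) with (fun i => u (xg a b N i) (tg T M j) - U j i) in Hgrid.
  assert (B <= Rabs CR * (tstep T M ^ 2 + hstep a b N ^ 2))
    by (apply Rmult_le_compat_r; [nra | apply Rle_abs]).
  assert (0 <= tstep T M ^ 2 + hstep a b N ^ 2) by nra.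
  nra.
Qed.
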